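(* Let $\widetilde{\mathsf T}(z)$ be the operator defined in the context, written in the normal form $\widetilde{\mathsf T}(z)=\sum_\alpha f_\alpha(z)\mathsf D^{(\alpha)}$. Then for every $k\in\{1,\dots,d\}$ and every smooth function $F$ of $(k_1,\dots,k_{n-1})$, setting $G(\bm y,\rho)=F(\bm k(\bm y,\rho))$, one has $$\sum_\alpha f_\alpha(y_k)\,(\mathsf D^{(\alpha)}F)(\bm k(\bm y,\rho))=-\frac{\partial^2}{\partial y_k^2}G(\bm y,\rho),$$ at all points with $\rho\ne0$, $y_k\notin\{z_1,\dots,z_{n-1}\}$; i.e. $\widetilde{\mathsf T}(y_k)=-\partial_{y_k}^2$.
   Context: $n\ge4$, $d=n-3$, $z_1,\dots,z_{n-1}\in\mathbb C$ distinct, $j_1,\dots,j_{n-1}\in\mathbb C$, $\delta_r=j_r(j_r+1)$. Change of variables: $k_r(\bm y,\rho)=\rho\,\kappa_r(\bm y)$, $\kappa_r(\bm y)=\frac{\prod_{k=1}^{d}(z_r-y_k)}{\prod_{s\ne r}(z_r-z_s)}$, $r=1,\dots,n-1$, with $\bm y=(y_1,\dots,y_d)$, $\rho\in\mathbb C^*$. Define operators in the variables $k_1,\dots,k_{n-1}$ depending on $z\in\mathbb C\setminus\{z_r\}$: $\mathsf c(z)=\sum_{r=1}^{n-1}\frac{k_r}{z-z_r}$, $\mathsf a(z)=-\sum_{r=1}^{n-1}\frac{k_r}{z-z_r}\partial_{k_r}$, $\mathsf b(z)=\sum_{r=1}^{n-1}\frac{1}{z-z_r}\big(\frac{\delta_r}{k_r}-k_r\partial_{k_r}^2\big)$,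 $\mathsf a'(z)=\sum_{r}\frac{k_r}{(z-z_r)^2}\partial_{k_r}$, and $\widetilde{\mathsf T}(z)=-\mathsf a(z)^2+\mathsf a'(z)-\mathsf c(z)\mathsf b(z)$. Expanding, $\widetilde{\mathsf T}(z)=\sum_\alpha f_\alpha(z)\mathsf D^{(\alpha)}$ with rational functions $f_\alpha$ of $z$ placed to the left of $z$-independent differential operators $\mathsf D^{(\alpha)}$ in $\bm k$ (e.g. $\mathsf a(z)^2=\sum_{r,s}\frac{1}{(z-z_r)(z-z_s)}k_r\partial_{k_r}k_s\partial_{k_s}$); ''$\widetilde{\mathsf T}(y_k)$'' means substituting $z=y_k$ in the $f_\alpha$ and pulling back via the change of variables. (In the paper, $\widetilde{\mathsf T}(z)$ represents the conjugate of the operator $\mathsf T(z)=\sum_{r=1}^{n-1}\big(\frac{\delta_r}{(z-z_r)^2}+\frac{\mathsf H_r}{z-z_r}\big)$, built from the Gaudin Hamiltonians $\mathsf H_r$, by the twisted Fourier transform.) *)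

From HB Require Import structures.
From mathcomp Require Import all_boot all_order all_algebra.
From mathcomp Require Import all_classical all_reals all_analysis.
From mathcomp Require Import complex.
Set Implicit Arguments. Unset Strict Implicit. Unset Printing Implicit Defensive.
Import Order.TTheory GRing.Theory Num.Theory.
Import numFieldNormedType.Exports.
Local Open Scope ring_scope.

Section Gaudin.
Variable R : realType.
Local Notation C := R[i].
Local Notation Co := (R[i])^o.

Definition pd (m : nat) (F : 'rV[C]_m -> Co) (r : 'I_m) : 'rV[C]_m -> Co :=
  fun x => derive F x (delta_mx 0 r).

Definition kappa (n : nat) (z : 'I_(n - 1) -> C) (y : 'rV[C]_(n - 3))
  (r : 'I_(n - 1)) : C :=
  (\prod_(l < n - 3) (z r - y 0 l)) / (\prod_(s < n - 1 | s != r) (z r - z s)).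

Definition kvec (n : nat) (z : 'I_(n - 1) -> C) (y : 'rV[C]_(n - 3)) (rho : C)
  : 'rV[C]_(n - 1) := \row_r (rho * kappa z y r).

Variable m : nat.
Implicit Types (z : 'I_m -> C) (delta : 'I_m -> C) (w : C) (G : 'rV[C]_m -> Co).

Definition op_c z w G : 'rV[C]_m -> Co :=
  fun k => \sum_(r < m) (k 0 r / (w - z r)) * G k.

Definition op_a z w G : 'rV[C]_m -> Co :=
  fun k => - \sum_(r < m) (k 0 r / (w - z r)) * pd G r k.

Definition op_b z delta w G : 'rV[C]_m -> Co :=
  fun k => \sum_(r < m) (1 / (w - z r)) *
             (delta r / k 0 r * G k - k 0 r * pd (pd G r) r k).

Definition op_a' z w G : 'rV[C]_m -> Co :=
  fun k => \sum_(r < m) (k 0 r / (w - z r) ^+ 2) * pd G r k.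

Definition Ttilde z delta w G : 'rV[C]_m -> Co :=
  fun k => - op_a z w (op_a z w G) k + op_a' z w G k
           - op_c z w (op_b z delta w G) k.

End Gaudin.

Notation CV R m := ('rV[R[i]]_m : normedModType R[i]).

From HB Require Import structures.
From mathcomp Require Import all_boot all_order all_algebra.
From mathcomp Require Import all_classical all_reals all_analysis.
From mathcomp Require Import complex ring zify.
Set Implicit Arguments. Unset Strict Implicit. Unset Printing Implicit Defensive.
Import Order.TTheory GRing.Theory Num.Theory.
Import numFieldNormedType.Exports.
Local Open Scope ring_scope.
Local Open Scope classical_set_scope.

(* Put c_r := k_r / (y_k - z_r). On the image of the change of variables,
   c_r = - rho prod_{l <> k} (z_r - y_l) / prod_{s <> r} (z_r - z_s), so
   sum_r c_r = 0 by Lagrange interpolation of a polynomial of degree d - 1 < n - 2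
   at the n - 1 nodes z_r: thus c(y_k) = 0 and the term c(y_k) b(y_k) drops out.
   Expanding -a(w)^2 + a'(w), the first-order terms cancel and what remains is
   - sum_{r,s} c_r c_s d_r d_s. On the other hand k(y, rho) is affine in y_k with
   slope (c_r)_r, so d^2 G / dy_k^2 is the second derivative of F in the direction
   (c_r)_r, which is sum_{r,s} c_r c_s d_r d_s F. *)

Lemma size_prod_XsubC_pred (K : nzRingType) (I : finType) (P : pred I) (F : I -> K) :
  size (\prod_(i | P i) ('X - (F i)%:P)) = #|P|.+1.
Proof. by rewrite -big_filter size_prod_XsubC size_filter -sum1_card sum1_count. Qed.

Section LagrangeInterpolation.
Variables (K : fieldType) (m : nat) (z : 'I_m -> K).
Hypothesis z_inj : injective z.

Local Notation basis r := (\prod_(s < m | s != r) ('X - (z s)%:P)).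
Local Notation den r := (\prod_(s < m | s != r) (z r - z s)).

Lemma size_lagrange_basis r : size (basis r) = m.
Proof.
by rewrite size_prod_XsubC_pred cardC1 card_ord prednK // (leq_ltn_trans _ (ltn_ord r)).
Qed.

Lemma horner_lagrange_basis r t : (basis r).[z t] = (r == t)%:R * den r.
Proof.
rewrite horner_prod; have [<- | rt] := eqVneq r t.
  by rewrite mul1r; apply: eq_bigr => s _; rewrite hornerXsubC.
by rewrite mul0r (bigD1 t) 1?eq_sym //= hornerXsubC subrr mul0r.
Qed.

Lemma lagrange_interpolation (p : {poly K}) : (size p <= m)%N ->
  p = \sum_(r < m) (p.[z r] / den r) *: basis r.
Proof.
move=> sp; apply/esym/eqP; rewrite -subr_eq0; apply/eqP.
apply: (@roots_geq_poly_eq0 _ _ (map z (enum 'I_m))).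
- apply/allP => _ /mapP[t _ ->]; apply/rootP.
  rewrite hornerD hornerN horner_sum (bigD1 t) //= [X in _ + X - _]big1 => [|r rt].
    rewrite hornerZ horner_lagrange_basis eqxx mul1r mulfVK ?addr0 ?subrr //.
    by apply/prodf_neq0 => s st; rewrite subr_eq0 (inj_eq z_inj) eq_sym.
  by rewrite hornerZ horner_lagrange_basis (negbTE rt) mul0r mulr0.
- by rewrite map_inj_uniq ?enum_uniq.
rewrite size_map size_enum_ord (leq_trans (size_polyD _ _)) // geq_max size_polyN sp andbT.
rewrite (leq_trans (size_sum _ _ _)) //; apply/bigmax_leqP => r _.
by rewrite (leq_trans (size_scale_leq _ _)) // size_lagrange_basis.
Qed.

(* Compare the coefficients of X^(m-1): the basis polynomials are monic of size m. *)
Lemma lagrange_sum_eq0 (p : {poly K}) : (size p < m)%N ->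
  \sum_(r < m) p.[z r] / den r = 0.
Proof.
move=> sp; have m_gt0 : (0 < m)%N := leq_ltn_trans (leq0n _) sp.
have /(congr1 (fun q : {poly K} => q`_m.-1)) := lagrange_interpolation (ltnW sp).
rewrite nth_default; last by rewrite -ltnS prednK.
rewrite coef_sum => coef_eq; rewrite [RHS]coef_eq; apply: eq_bigr => r _.
have /monicP := monic_prod_XsubC (index_enum 'I_m) (fun s => s != r) z.
by rewrite coefZ /lead_coef size_lagrange_basis => ->; rewrite mulr1.
Qed.

End LagrangeInterpolation.

Lemma exchange_big_mul (K : comNzRingType) m (c : 'I_m -> K) (Q : 'I_m -> 'I_m -> K) :
  \sum_s c s * \sum_r c r * Q r s = \sum_r c r * \sum_s c s * Q r s.
Proof.
under eq_bigr do rewrite big_distrr.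
rewrite exchange_big; apply: eq_bigr => r _; rewrite big_distrr.
by apply: eq_bigr => s _ /=; rewrite mulrCA.
Qed.

Lemma sum_mul_oppB_addK (K : comNzRingType) m (c a b : 'I_m -> K) :
  \sum_s c s * (- a s - b s) + \sum_s c s * b s = - \sum_s c s * a s.
Proof. by rewrite -big_split -sumrN; apply: eq_bigr => s _ /=; rewrite mulrBr mulrN subrK. Qed.

Section DirectionalDerivative.
Context {K : numFieldType} {V W : normedModType K}.

Lemma derive_line_eq (V' : normedModType K) (f : V -> W) (f' : V' -> W) x x' v v' :
  (forall h : K, f (h *: v + x) = f' (h *: v' + x')) -> 'D_v f x = 'D_v' f' x'.
Proof.
move=> ff'; have := ff' 0; rewrite !scale0r !add0r => fx.
by rewrite /derive; do 2 f_equal; apply/funext => h /=; rewrite ff' fx.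
Qed.

Lemma is_derive_line_affine (f : V -> W) x v a :
  (forall h : K, f (h *: v + x) - f x = h *: a) -> is_derive x v f a.
Proof.
move=> fa; have slope_a : \forall h \near 0^', h^-1 *: ((f \o shift x) (h *: v) - f x) = a.
  near=> h; have h0 : h != 0 by near: h; exact: nbhs_dnbhs_neq.
  by rewrite /= fa scalerA mulVf // scale1r.
by apply: DeriveDef; [exact: is_cvg_near_cst slope_a | exact: lim_near_cst slope_a].
Unshelve. all: by end_near.
Qed.

Lemma derive_lincomb n (a : 'I_n -> K) (f : 'I_n -> V -> W) x v :
  (forall i, derivable (f i) x v) ->
  'D_v (fun y => \sum_i a i *: f i y) x = \sum_i a i *: 'D_v (f i) x.
Proof.
move=> df; rewrite -(fct_sumE _ _ (fun i => a i \*: f i)) derive_sum => [|i].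
  by apply: eq_bigr => i _; rewrite deriveZ.
exact: derivableZ.
Qed.

Lemma derive_row m (F : 'rV[K]_m -> W) x (u : 'rV[K]_m) : differentiable F x ->
  'D_u F x = \sum_r u 0 r *: 'D_(delta_mx 0 r) F x.
Proof.
move=> dF; rewrite deriveE // {1}(row_sum_delta u) linear_sum.
by apply: eq_bigr => r _; rewrite linearZ deriveE.
Qed.

End DirectionalDerivative.

Section SecondDirectionalDerivative.
Variables (R : realType) (m : nat).

Lemma derive2_row (U : set (CV R m)) (F : CV R m -> R[i]^o) (x v : CV R m) :
  open U -> (forall y, U y -> differentiable F y) -> U x ->
  (forall r, differentiable (pd F r) x) ->
  'D_v (fun y => 'D_v F y) x = \sum_r v 0 r * \sum_s v 0 s * pd (pd F r) s x.
Proof.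
move=> oU dF Ux dpF.
have near_x : \forall y \near x, 'D_v F y = \sum_r v 0 r * pd F r y.
  by apply: filterS (open_nbhs_nbhs (conj oU Ux)) => y Uy; rewrite derive_row //; exact: dF.
rewrite (near_eq_derive _ near_x) derive_lincomb => [|r]; last exact: diff_derivable.
by apply: eq_bigr => r _; rewrite derive_row.
Qed.

End SecondDirectionalDerivative.

Section GaudinOperators.
Variables (R : realType) (m : nat) (z : 'I_m -> R[i]) (w : R[i]).
Local Notation C := R[i].

Definition c_coef (x : 'rV[C]_m) r : C := x 0 r / (w - z r).

Global Instance is_derive_c_coef x e r : is_derive x e (fun x => c_coef x r : C^o) (c_coef e r).
Proof. by apply: is_derive_line_affine => h; rewrite /c_coef !mxE mulrDl addrK -mulrA. Qed.

Lemma pd_op_a (F : 'rV[C]_m -> C^o) x s : (forall r, differentiable (pd F r) x) ->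
  pd (op_a z w F) s x = - \sum_r c_coef x r * pd (pd F r) s x - pd F s x / (w - z s).
Proof.
move=> dF; pose e : 'rV[C]_m := delta_mx 0 s.
pose g r := (fun x => c_coef x r : C^o) * pd F r.
have dg r : derivable (g r) x e.
  by apply: derivableM; [exact: ex_derive | exact: diff_derivable].
have pd_g r : pd (g r) s x = c_coef x r * pd (pd F r) s x + pd F r x * c_coef e r.
  by rewrite /pd deriveM ?derive_val //; exact: diff_derivable.
have -> : op_a z w F = - \sum_r g r by apply/funext => x'; rewrite /op_a fct_sumE.
transitivity (- \sum_r pd (g r) s x).
  by rewrite {1}/pd deriveN ?derive_sum //; exact: derivable_sum.
have pick : \sum_r pd F r x * c_coef e r = pd F s x / (w - z s).
  rewrite (bigD1 s) //= big1 => [|r rs]; last by rewrite /c_coef mxE (negbTE rs) mul0r mulr0.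
  by rewrite /c_coef mxE !eqxx mul1r addr0.
by rewrite (eq_bigr _ (fun r _ => pd_g r)) big_split opprD pick.
Qed.

(* The first-order part of a(w)^2 is cancelled by a'(w). *)
Lemma Ttilde_expand (delta : 'I_m -> C) (F : 'rV[C]_m -> C^o) x :
  (forall r, differentiable (pd F r) x) ->
  Ttilde z delta w F x =
  - \sum_r c_coef x r * \sum_s c_coef x s * pd (pd F r) s x
  - (\sum_r c_coef x r) * op_b z delta w F x.
Proof.
move=> dF.
have a2 : - op_a z w (op_a z w F) x = \sum_s c_coef x s *
    (- (\sum_r c_coef x r * pd (pd F r) s x) - pd F s x / (w - z s)).
  by rewrite opprK; apply: eq_bigr => s _; rewrite pd_op_a.
have a' : op_a' z w F x = \sum_s c_coef x s * (pd F s x / (w - z s)).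
  by apply: eq_bigr => s _; rewrite /c_coef expr2 invfM; ring.
have swap := exchange_big_mul (c_coef x) (fun r s => pd (pd F r) s x : C).
have a2a' : - op_a z w (op_a z w F) x + op_a' z w F x =
    - \sum_r c_coef x r * \sum_s c_coef x s * pd (pd F r) s x.
  by rewrite a2 a' -swap; exact: sum_mul_oppB_addK.
have -> : Ttilde z delta w F x =
    - op_a z w (op_a z w F) x + op_a' z w F x - op_c z w (op_b z delta w F) x by [].
by rewrite a2a' /op_c -big_distrl.
Qed.
End GaudinOperators.

Section ChangeOfVariables.
Variables (R : realType) (n : nat) (z : 'I_(n - 1) -> R[i]).
Variables (y : 'rV[R[i]]_(n - 3)) (rho : R[i]) (k : 'I_(n - 3)).
Hypothesis y_k_neq_z : forall r, y 0 k != z r.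

Local Notation x0 := (kvec z y rho).
Local Notation c r := (c_coef z (y 0 k) x0 r).
Local Notation v := (\row_r c r).

Lemma kappa_bigD1 (y' : 'rV[R[i]]_(n - 3)) r : kappa z y' r =
  (z r - y' 0 k) * \prod_(l < n - 3 | l != k) (z r - y' 0 l)
  / \prod_(s < n - 1 | s != r) (z r - z s).
Proof. by rewrite /kappa (bigD1 k) //= mulrA. Qed.

Lemma c_coef_kvec r : c r = - (rho * \prod_(l < n - 3 | l != k) (z r - y 0 l)
                               / \prod_(s < n - 1 | s != r) (z r - z s)).
Proof.
have yz : y 0 k - z r != 0 by rewrite subr_eq0.
rewrite /c_coef mxE kappa_bigD1 -opprB.
set P := \prod_(l < n - 3 | l != k) _; set D := \prod_(s < n - 1 | s != r) _.
rewrite !mulNr mulrN mulNr; congr (- _).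
by rewrite [X in X / _](_ : _ = rho * P / D * (y 0 k - z r)) ?mulfK //; ring.
Qed.

Lemma kvec_line (h : R[i]) : kvec z (h *: delta_mx 0 k + y) rho = h *: v + x0.
Proof.
apply/rowP => r; rewrite !mxE c_coef_kvec !kappa_bigD1 !mxE !eqxx mulr1.
have -> : \prod_(l < n - 3 | l != k) (z r - (h *: delta_mx 0 k + y) 0 l) =
          \prod_(l < n - 3 | l != k) (z r - y 0 l).
  by apply: eq_bigr => l lk; rewrite !mxE (negbTE lk) andbF mulr0 add0r.
ring.
Qed.

Lemma sum_c_coef_kvec : injective z -> \sum_r c r = 0.
Proof.
move=> z_inj; pose p := \prod_(l < n - 3 | l != k) ('X - (y 0 l)%:P).
have size_p : (size p < n - 1)%N.
  have := ltn_ord k; rewrite size_prod_XsubC_pred cardC1 card_ord; lia.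
have P_horner r : \prod_(l < n - 3 | l != k) (z r - y 0 l) = p.[z r].
  by rewrite horner_prod; apply: eq_bigr => l _; rewrite hornerXsubC.
under eq_bigr do rewrite c_coef_kvec P_horner -mulrA.
by rewrite sumrN -mulr_sumr lagrange_sum_eq0 // mulr0 oppr0.
Qed.

Lemma pd2_comp_kvec (F : CV R (n - 1) -> R[i]^o) :
  pd (pd (fun y' => F (kvec z y' rho)) k) k y = 'D_v (fun x => 'D_v F x) x0.
Proof.
have pd_line (h : R[i]) : pd (fun y' => F (kvec z y' rho)) k (h *: delta_mx 0 k + y) =
                          'D_v F (h *: v + x0).
  by apply: derive_line_eq => h'; rewrite !addrA -!scalerDl kvec_line.
exact: derive_line_eq pd_line.
Qed.

End ChangeOfVariables.

Theorem mainTheorem5 (R : realType) (n : nat) (hn : (4 <= n)%N)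
  (z : 'I_(n - 1) -> R[i]) (hz : injective z) (j : 'I_(n - 1) -> R[i])
  (U : set (CV R (n - 1))) (hU : open U)
  (F : CV R (n - 1) -> (R[i])^o)
  (hF1 : forall x : CV R (n - 1), U x -> differentiable F x)
  (hF2 : forall (r : 'I_(n - 1)) (x : CV R (n - 1)), U x -> differentiable (pd F r) x)
  (k : 'I_(n - 3)) (y : 'rV[R[i]]_(n - 3)) (rho : R[i])
  (hrho : rho != 0) (hyk : forall r : 'I_(n - 1), y 0 k != z r)
  (hU0 : U (kvec z y rho)) :
  Ttilde z (fun r => j r * (j r + 1)) (y 0 k) F (kvec z y rho)
  = - pd (pd (fun y' : 'rV[R[i]]_(n - 3) => F (kvec z y' rho)) k) k y.
Proof.
have dpF r : differentiable (pd F r) (kvec z y rho : CV R (n - 1)) by exact: hF2.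
rewrite Ttilde_expand // (sum_c_coef_kvec rho hyk hz) mul0r subr0 (pd2_comp_kvec rho hyk).
rewrite (derive2_row _ hU hF1 hU0 dpF); congr (- _).
by apply: eq_bigr => r _; rewrite mxE; congr (_ * _); apply: eq_bigr => s _; rewrite mxE.
Qed.
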